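(* Let $L$ be a $\mathbb{Z}$-colorable link. Then there exist a regular diagram $D$ of $L$ and a $\mathbb{Z}$-coloring $\gamma$ on $D$ such that $\mathrm{Im}(\gamma)=\{0,a_1,a_2,\dots,a_n\}$ for some positive integer $n$ and integers $a_i>0$ $(i=1,\dots,n)$.
   Context: Let $D$ be a regular diagram of a link $L$; an arc of $D$ is a maximal connected piece of the diagram that is unbroken (it passes over crossings and ends at undercrossings). A $\mathbb{Z}$-coloring on $D$ is a map $\gamma:\{\text{arcs of } D\}\to\mathbb{Z}$ such that at each crossing of $D$ with over arc $a$ and under arcs $b,c$ one has $2\gamma(a)=\gamma(b)+\gamma(c)$. The coloring is trivial if it assigns the same color to all arcs. A link is $\mathbb{Z}$-colorable if it has a diagram admitting a non-trivial $\mathbb{Z}$-coloring. *)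

From mathcomp Require Import all_boot all_order all_algebra.
Set Implicit Arguments. Unset Strict Implicit. Unset Printing Implicit Defensive.
Import Order.TTheory GRing.Theory Num.Theory.
Local Open Scope ring_scope.

(* The combinatorial data of a regular link diagram that Z-colorings depend on:
   a finite set of arcs and a finite set of crossings, each crossing having an
   over arc and two under arcs (the arcs ending at that crossing). *)
Record diagram := Diagram {
  darc : finType;
  crossing : finType;
  over_arc : crossing -> darc;
  under_arc1 : crossing -> darc;
  under_arc2 : crossing -> darc
}.

Definition Zcoloring (D : diagram) (gamma : darc D -> int) : Prop :=
  forall c : crossing D,
    2 * gamma (over_arc c) = gamma (under_arc1 c) + gamma (under_arc2 c).

Definition trivial_coloring (D : diagram) (gamma : darc D -> int) : Prop :=
  forall a b : darc D, gamma a = gamma b.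

Definition Zcolorable (link : Type) (is_diagram_of : diagram -> link -> Prop)
    (L : link) : Prop :=
  exists D : diagram, is_diagram_of D L /\
    exists gamma : darc D -> int, Zcoloring gamma /\ ~ trivial_coloring gamma.

Definition image_of (D : diagram) (gamma : darc D -> int) (z : int) : Prop :=
  exists x : darc D, gamma x = z.

From mathcomp Require Import all_boot all_order all_algebra.
From mathcomp Require Import ring.
Set Implicit Arguments. Unset Strict Implicit. Unset Printing Implicit Defensive.
Import Order.TTheory GRing.Theory Num.Theory.
Local Open Scope ring_scope.

(* The crossing relation is affine, so subtracting the minimal color of a
   non-trivial coloring gives a coloring with non-negative colors, 0 attained
   and some positive color; the positive colors are then listed by the finitely
   many arcs. *)

Lemma Zcoloring_subr (D : diagram) (gamma : darc D -> int) (k : int) :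
  Zcoloring gamma -> Zcoloring (fun x => gamma x - k).
Proof. by move=> col c; rewrite mulrBr col; ring. Qed.

Lemma nontrivial_coloring_inhabited (D : diagram) (gamma : darc D -> int) :
  ~ trivial_coloring gamma -> exists x0 : darc D, True.
Proof.
move=> nt; case: (pickP (fun _ : darc D => true)) => [x _ | none]; first by exists x.
by exfalso; apply: nt => a; have := none a.
Qed.

Lemma exists_argmin (T : finType) (f : T -> int) (x0 : T) :
  exists xm, forall x, f xm <= f x.
Proof.
by exists [arg min_(i < x0) f i]%O; case: arg_minP => // xm _ min x; apply: min.
Qed.

Lemma nonconstant_gt_min (T : finType) (f : T -> int) (xm : T) :
  (forall x, f xm <= f x) -> ~ (forall a b, f a = f b) -> exists xM, f xm < f xM.
Proof.
move=> min nconst.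
case: (boolP [exists x, f xm < f x]) => [/existsP // | /existsPn not_gt].
exfalso; apply: nconst => a b.
suff eq_min x : f x = f xm by rewrite !eq_min.
by apply/eqP; rewrite eq_le min andbT leNgt not_gt.
Qed.

Lemma enum_positive_values (T : finType) (f : T -> int) (xM : T) :
  0 < f xM ->
  exists (n : nat) (a : 'I_n -> int), (0 < n)%N /\ (forall i, 0 < a i) /\
    (forall z, 0 < z -> (exists x, f x = z) <-> exists i, a i = z).
Proof.
move=> fxM_gt0.
pose a (i : 'I_#|T|) := if 0 < f (enum_val i) then f (enum_val i) else f xM.
exists #|T|, a; split; first by apply/card_gt0P; exists xM.
split; first by move=> i; rewrite /a; case: ifP.
move=> z z_gt0; split => [[x fx] | [i <-]].
  by exists (enum_rank x); rewrite /a enum_rankK fx z_gt0.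
by rewrite /a; case: ifP => _; [exists (enum_val i) | exists xM].
Qed.

Lemma nontrivial_Zcoloring_normal_form (D : diagram) (gamma : darc D -> int) :
  Zcoloring gamma -> ~ trivial_coloring gamma ->
  exists gamma' : darc D -> int, Zcoloring gamma' /\
    exists (n : nat) (a : 'I_n -> int),
      (0 < n)%N /\ (forall i, 0 < a i) /\
      (forall z : int, image_of gamma' z <-> (z = 0 \/ exists i, a i = z)).
Proof.
move=> col nt; have [x0 _] := nontrivial_coloring_inhabited nt.
have [xm min] := exists_argmin gamma x0.
have [xM gt_min] := nonconstant_gt_min min nt.
pose gamma' x := gamma x - gamma xm.
have ge0 x : 0 <= gamma' x by rewrite subr_ge0.
have gamma'_xM_gt0 : 0 < gamma' xM by rewrite subr_gt0.
have [n [a [n_gt0 [a_gt0 pos_image]]]] := enum_positive_values gamma'_xM_gt0.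
exists gamma'; split; first exact: Zcoloring_subr.
exists n, a; do 2!split => //; move=> z; split.
- move=> [x <-]; have := ge0 x; rewrite le0r => /orP [/eqP -> | pos]; first by left.
  by right; apply/pos_image => //; exists x.
- case=> [-> | [i <-]]; first by exists xm; rewrite /gamma' subrr.
  by apply/(pos_image _ (a_gt0 i)); exists i.
Qed.

Theorem lemma2p1 (link : Type) (is_diagram_of : diagram -> link -> Prop)
    (L : link) :
  Zcolorable is_diagram_of L ->
  exists D : diagram, is_diagram_of D L /\
    exists gamma : darc D -> int, Zcoloring gamma /\
      exists (n : nat) (a : 'I_n -> int),
        (0 < n)%N /\ (forall i, 0 < a i) /\
        (forall z : int, image_of gamma z <-> (z = 0 \/ exists i, a i = z)).
Proof.
move=> [D [DL [gamma [col nt]]]].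
by exists D; split => //; apply: nontrivial_Zcoloring_normal_form col nt.
Qed.
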